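(* Let $K$ be an algebraically closed field, complete with respect to a non-Archimedean norm $|\cdot|$ (possibly trivial), let $R>0$ be real and $K_R:=\{k\in K:|k|\le R\}$. Let $\mathcal{F}$ be an $R$-good filter. For each $B_q(k)\in\mathcal{F}$ define $|\cdot|_{B_q(k)}:\mathcal{A}_{\mathrm{Lin}}\to\mathbb{R}_{\ge0}$ by $|aT-b|_{B_q(k)}:=\max\{|ak-b|,\,|a|\cdot q\}$. Then the map $|aT-b|_{\mathcal{F}}:=\inf_{B_q(k)\in\mathcal{F}}|aT-b|_{B_q(k)}$ defines a bounded $K$-seminorm on $\mathcal{A}_{\mathrm{Lin}}$.
   Context: $\mathcal{A}_{\mathrm{Lin}}:=\{aT-b: a,b\in K\}$. An upper real is a subset $x\subseteq\mathbb{Q}$ (write $x<q$ for $q\in x$) that is upward closed and rounded; the right Dedekind section of a real $r$ is $\{q\in\mathbb{Q}:r<q\}$; $x\le y$ for upper reals means $\{q:y<q\}\subseteq\{q:x<q\}$; the infimum of a family of reals $x_i$ is the upper real $\bigcup_i\{q\in\mathbb{Q}:x_i<q\}$. A $K$-seminorm on $\mathcal{A}_{\mathrm{Lin}}$ is a map $|\cdot|_x$ from $\mathcal{A}_{\mathrm{Lin}}$ to inhabited upper reals $\ge0$ such that for $a\in K$, $f,f'\in\mathcal{A}_{\mathrm{Lin}}$: $|a|_x$ is the right Dedekind section of $|a|$; $|aT|_x=|a|\cdot|T|_x$; $|f+f'|_x\le\max\{|f|_x,|f'|_x\}$. It is bounded if $|aT-b|_x\le$ the right Dedekind section of $\max\{|a|R,|b|\}$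 for all $a,b\in K$. A formal ball is a pair $(k,q)\in K_R\times\mathbb{Q}_{>0}$, written $B_q(k)$, with $B_{q'}(k')\subseteq B_q(k)$ meaning $|k-k'|<q$ and $q'\le q$. A filter of formal balls is an inhabited set $\mathcal{F}$ of formal balls, upward closed under $\subseteq$, such that any two members have a common member of $\mathcal{F}$ contained in both. It is $R$-good if moreover $B_q(k)\in\mathcal{F}$ for all $k\in K_R$ and rationals $q>R$, and whenever $B_q(k)\in\mathcal{F}$ there is $B_{q'}(k')\in\mathcal{F}$ with $q'<q$. *)

From HB Require Import structures.
From mathcomp Require Import all_boot all_order all_algebra.
From mathcomp Require Import boolp classical_sets reals.
Set Implicit Arguments. Unset Strict Implicit. Unset Printing Implicit Defensive.
Import Order.TTheory GRing.Theory Num.Theory.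
Local Open Scope ring_scope.
Local Open Scope classical_set_scope.

Section Defs.
Variables (RT : realType) (K : fieldType) (nrm : K -> RT).

Definition nonarch_abs : Prop :=
  [/\ forall x, 0 <= nrm x,
      forall x, nrm x = 0 <-> x = 0,
      forall x y, nrm (x * y) = nrm x * nrm y &
      forall x y, nrm (x + y) <= Num.max (nrm x) (nrm y)].

Definition complete_wrt : Prop :=
  forall u : nat -> K,
    (forall e : RT, 0 < e -> exists N, forall m n, (N <= m)%N -> (N <= n)%N ->
       nrm (u m - u n) < e) ->
    exists l : K, forall e : RT, 0 < e -> exists N, forall n, (N <= n)%N ->
       nrm (u n - l) < e.

(** Upper reals: subsets of Q (x < q means q \in x) *)
Definition upper_real (x : set rat) : Prop :=
  (forall q q', x q -> q <= q' -> x q') /\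
  (forall q, x q -> exists2 q', x q' & q' < q).

Definition inhabited_ur (x : set rat) : Prop := exists q, x q.

Definition rsection (r : RT) : set rat := [set q | r < ratr q].

Definition ur_le (x y : set rat) : Prop := y `<=` x.

Definition ur_max (x y : set rat) : set rat := x `&` y.

Definition ur_scale (c : RT) (x : set rat) : set rat :=
  [set q | exists2 p, x p & c * ratr p < ratr q].

(** Elements of A_Lin = {aT - b : a, b in K} are encoded by the pair (a, b);
    [N a b] is the value |aT - b|_x. Sums: (aT-b)+(a'T-b') = (a+a')T-(b+b'),
    the constant a is 0T - (-a), and aT is aT - 0. *)
Definition K_seminorm (N : K -> K -> set rat) : Prop :=
  [/\ forall a b, [/\ upper_real (N a b), inhabited_ur (N a b)
                    & ur_le (rsection 0) (N a b)],
      forall a, N 0 (- a) = rsection (nrm a),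
      forall a, N a 0 = ur_scale (nrm a) (N 1 0) &
      forall a b a' b', ur_le (N (a + a') (b + b')) (ur_max (N a b) (N a' b'))].

Definition bounded_K_seminorm (R : RT) (N : K -> K -> set rat) : Prop :=
  K_seminorm N /\
  forall a b, ur_le (N a b) (rsection (Num.max (nrm a * R) (nrm b))).

(** Formal balls B_q(k) encoded as pairs (k, q) *)
Definition formal_ball (R : RT) (B : K * rat) : Prop :=
  nrm B.1 <= R /\ 0 < B.2.

Definition ball_sub (B' B : K * rat) : Prop :=
  nrm (B.1 - B'.1) < ratr B.2 /\ B'.2 <= B.2.

Definition filter_balls (R : RT) (F : set (K * rat)) : Prop :=
  [/\ F `<=` formal_ball R,
      exists B, F B,
      forall B' B, F B' -> formal_ball R B -> ball_sub B' B -> F B &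
      forall B1 B2, F B1 -> F B2 ->
        exists B3, [/\ F B3, ball_sub B3 B1 & ball_sub B3 B2]].

Definition R_good (R : RT) (F : set (K * rat)) : Prop :=
  [/\ filter_balls R F,
      forall k q, nrm k <= R -> R < ratr q -> F (k, q) &
      forall B, F B -> exists2 B', F B' & B'.2 < B.2].

Definition ball_seminorm (B : K * rat) (a b : K) : RT :=
  Num.max (nrm (a * B.1 - b)) (nrm a * ratr B.2).

(** |aT - b|_F := inf_{B in F} |aT - b|_B  (union of right sections) *)
Definition F_seminorm (F : set (K * rat)) (a b : K) : set rat :=
  [set q | exists2 B, F B & ball_seminorm B a b < ratr q].

End Defs.

(** Each ball seminorm |aT - b|_{B_q(k)} = max(|ak - b|, |a|q) is itself a bounded
    seminorm, and it only grows when the ball grows: if B_{q'}(k') is inside B_q(k)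
    then |ak' - b| <= max(|a||k' - k|, |ak - b|) <= max(|a|q, |ak - b|) by the
    ultrametric inequality.  Since any two balls of F contain a common ball of F,
    the max-inequality for sums passes from the ball seminorms to their infimum.
    Scaling and constants pass to the infimum because they hold ball by ball, and
    the bound comes from the balls B_q(0), q > R, which lie in every R-good filter. *)

From mathcomp Require Import all_boot all_order all_algebra.
From mathcomp Require Import boolp classical_sets reals.
From mathcomp Require Import ring.
Set Implicit Arguments. Unset Strict Implicit. Unset Printing Implicit Defensive.
Import Order.TTheory GRing.Theory Num.Theory.
Local Open Scope ring_scope.
Local Open Scope classical_set_scope.

Lemma exists_rat_gt (RT : realType) (x : RT) : exists q : rat, x < ratr q.
Proof.
have x_lt_x1 : x < x + 1 by rewrite ltrDl.
have [q] := rat_in_itvoo x_lt_x1.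
by rewrite in_itv /= => /andP[xq _]; exists q.
Qed.

Lemma exists_rat_gt_mul (RT : realType) (c x y : RT) : 0 <= c -> c * x < y ->
  exists q : rat, x < ratr q /\ c * ratr q < y.
Proof.
rewrite le_eqVlt => /predU1P[<- | c_gt0] cxy.
  by have [q xq] := exists_rat_gt x; exists q; rewrite !mul0r in cxy *.
have x_lt_yc : x < y / c by rewrite ltr_pdivlMr // mulrC.
have [q] := rat_in_itvoo x_lt_yc.
by rewrite in_itv /= => /andP[xq qy]; exists q; rewrite mulrC -ltr_pdivlMr.
Qed.

Section NonArchimedeanAbsoluteValue.
Variables (RT : realType) (K : fieldType) (nrm : K -> RT).
Hypothesis nrm_abs : nonarch_abs nrm.

Lemma nrm_ge0 x : 0 <= nrm x.
Proof. by case: nrm_abs. Qed.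

Lemma nrm_eq0 x : nrm x = 0 <-> x = 0.
Proof. by case: nrm_abs. Qed.

Lemma nrmM x y : nrm (x * y) = nrm x * nrm y.
Proof. by case: nrm_abs. Qed.

Lemma nrmD_max x y : nrm (x + y) <= Num.max (nrm x) (nrm y).
Proof. by case: nrm_abs. Qed.

Lemma nrm0 : nrm 0 = 0.
Proof. exact/nrm_eq0. Qed.

Lemma nrm1 : nrm 1 = 1.
Proof.
have nrm1_neq0 : nrm 1 != 0 by apply/eqP => /nrm_eq0/eqP; rewrite oner_eq0.
by apply: (mulfI nrm1_neq0); rewrite -nrmM !mulr1.
Qed.

Lemma nrmN x : nrm (- x) = nrm x.
Proof.
suff nrmN1 : nrm (-1) = 1 by rewrite -mulN1r nrmM nrmN1 mul1r.
apply/eqP; rewrite -(eqrXn2 (_ : 0 < 2)%N) ?nrm_ge0 ?ler01 //.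
by rewrite expr2 -nrmM mulrNN mulr1 nrm1 expr1n.
Qed.

Lemma nrm_distC x y : nrm (x - y) = nrm (y - x).
Proof. by rewrite -nrmN opprB. Qed.

End NonArchimedeanAbsoluteValue.

Section UpperRealInfimum.
Variables (RT : realType) (T : Type) (F : set T).

Definition ur_inf (f : T -> RT) : set rat := [set q | exists2 B, F B & f B < ratr q].

Lemma ur_inf_upper_real f : upper_real (ur_inf f).
Proof.
split=> [q q' [B FB fBq] qq'|q [B FB fBq]].
  by exists B => //; apply: lt_le_trans fBq _; rewrite ler_rat.
have [q'] := rat_in_itvoo fBq; rewrite in_itv /= => /andP[fBq' q'q].
by exists q'; [exists B | rewrite -(ltr_rat RT)].
Qed.

Lemma ur_inf_inhabited f : (exists B, F B) -> inhabited_ur (ur_inf f).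
Proof.
by move=> [B FB]; have [q fBq] := exists_rat_gt (f B); exists q; exists B.
Qed.

Lemma ur_inf_ge r f : (forall B, F B -> r <= f B) -> ur_le (rsection r) (ur_inf f).
Proof. by move=> rf q [B /rf rfB fBq]; apply: le_lt_trans fBq. Qed.

Lemma ur_inf_cst r : (exists B, F B) -> ur_inf (fun=> r) = rsection r.
Proof.
move=> [B0 FB0]; apply/seteqP; split=> q /=; first by case.
by exists B0.
Qed.

Lemma ur_inf_scale c f : 0 <= c ->
  ur_inf (fun B => c * f B) = ur_scale c (ur_inf f).
Proof.
move=> c_ge0; apply/seteqP; split=> q /=.
  move=> [B FB /(exists_rat_gt_mul c_ge0)[p [fBp cpq]]].
  by exists p => //; exists B.
move=> [p [B FB fBp] cpq]; exists B => //.
by apply: le_lt_trans cpq; rewrite ler_wpM2l // ltW.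
Qed.

Lemma ur_inf_le_max f g h :
  (forall B1 B2, F B1 -> F B2 -> exists2 B, F B & h B <= Num.max (f B1) (g B2)) ->
  ur_le (ur_inf h) (ur_max (ur_inf f) (ur_inf g)).
Proof.
move=> hfg q [[B1 FB1 fB1q] [B2 FB2 gB2q]].
have [B FB hB] := hfg _ _ FB1 FB2.
by exists B => //; apply: le_lt_trans hB _; rewrite gt_max fB1q gB2q.
Qed.

End UpperRealInfimum.

Section BallSeminorm.
Variables (RT : realType) (K : fieldType) (nrm : K -> RT).
Hypothesis nrm_abs : nonarch_abs nrm.

Lemma ball_seminorm_ge0 B a b : 0 <= ball_seminorm nrm B a b.
Proof. by rewrite le_max nrm_ge0. Qed.

Lemma ball_seminorm_cst B a : ball_seminorm nrm B 0 (- a) = nrm a.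
Proof.
by rewrite /ball_seminorm mul0r sub0r opprK nrm0 // mul0r (max_idPl (nrm_ge0 nrm_abs _)).
Qed.

Lemma ball_seminorm_scale B a :
  ball_seminorm nrm B a 0 = nrm a * ball_seminorm nrm B 1 0.
Proof.
by rewrite /ball_seminorm !subr0 mul1r nrm1 // mul1r nrmM // maxr_pMr // nrm_ge0.
Qed.

Lemma ball_seminorm_add (B : K * rat) a b a' b' : 0 <= B.2 ->
  ball_seminorm nrm B (a + a') (b + b')
  <= Num.max (ball_seminorm nrm B a b) (ball_seminorm nrm B a' b').
Proof.
move=> r_ge0; rewrite /ball_seminorm maxACA.
have -> : (a + a') * B.1 - (b + b') = (a * B.1 - b) + (a' * B.1 - b') by ring.
apply: le_max2; first exact: nrmD_max.
rewrite -maxr_pMl ?ler0q //; apply: ler_wpM2r; first by rewrite ler0q.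
exact: nrmD_max.
Qed.

Lemma ball_seminorm_sub B' B a b : ball_sub nrm B' B ->
  ball_seminorm nrm B' a b <= ball_seminorm nrm B a b.
Proof.
move=> [kk' q'q]; have a_ge0 := nrm_ge0 nrm_abs a.
have a_dist : nrm a * nrm (B'.1 - B.1) <= nrm a * ratr B.2.
  by rewrite ler_wpM2l // nrm_distC // ltW.
rewrite /ball_seminorm ge_max; apply/andP; split.
  have -> : a * B'.1 - b = a * (B'.1 - B.1) + (a * B.1 - b) by ring.
  apply: le_trans (nrmD_max nrm_abs _ _) _.
  by rewrite nrmM // maxC le_max2.
by rewrite le_max ler_wpM2l ?ler_rat ?orbT.
Qed.

End BallSeminorm.

Section FilterSeminorm.
Variables (RT : realType) (K : fieldType) (nrm : K -> RT) (R : RT) (F : set (K * rat)).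
Hypothesis nrm_abs : nonarch_abs nrm.

Lemma F_seminormE a b : F_seminorm nrm F a b = ur_inf F (fun B => ball_seminorm nrm B a b).
Proof. by []. Qed.

Lemma F_seminorm_K_seminorm : filter_balls nrm R F -> K_seminorm nrm (F_seminorm nrm F).
Proof.
case=> F_balls F_inhabited _ F_meet; split=> [a b|a|a|a b a' b']; rewrite !F_seminormE.
- split; [exact: ur_inf_upper_real | exact: ur_inf_inhabited |].
  by apply: ur_inf_ge => B _; apply: ball_seminorm_ge0.
- under eq_fun do rewrite ball_seminorm_cst //.
  exact: ur_inf_cst.
- under eq_fun do rewrite ball_seminorm_scale //.
  exact/ur_inf_scale/nrm_ge0.
- apply: ur_inf_le_max => B1 B2 FB1 FB2.
  have [B [FB B_B1 B_B2]] := F_meet _ _ FB1 FB2.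
  have [_ r_gt0] := F_balls _ FB.
  exists B => //; apply: le_trans (ball_seminorm_add nrm_abs _ _ _ _ (ltW r_gt0)) _.
  by apply: le_max2; apply: ball_seminorm_sub.
Qed.

Lemma F_seminorm_bounded : 0 <= R ->
    (forall k q, nrm k <= R -> R < ratr q -> F (k, q)) ->
  forall a b, ur_le (F_seminorm nrm F a b) (rsection (Num.max (nrm a * R) (nrm b))).
Proof.
move=> R_ge0 F_big a b q; rewrite /rsection /= gt_max => /andP[aRq bq].
have [r [Rr arq]] := exists_rat_gt_mul (nrm_ge0 nrm_abs a) aRq.
exists (0, r); first by apply: F_big; rewrite ?nrm0.
by rewrite /ball_seminorm /= mulr0 sub0r nrmN // gt_max bq.
Qed.

End FilterSeminorm.

Theorem claim2p18 (RT : realType) (K : closedFieldType) (nrm : K -> RT)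
  (Hnrm : nonarch_abs nrm) (Hcomplete : complete_wrt nrm)
  (R : RT) (HR : 0 < R) (F : set (K * rat)) (HF : R_good nrm R F) :
  bounded_K_seminorm nrm R (F_seminorm nrm F).
Proof.
case: HF => F_filter F_big _.
split; first exact: F_seminorm_K_seminorm F_filter.
exact: F_seminorm_bounded (ltW HR) F_big.
Qed.
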